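(* Let $n,k$ be positive integers with $n\geq k$ and $n> 3(n-k)$. Then for every $C\in\mathcal{K}_k(n)$, the diagram $\beta_{n,k}(C)$ lies in $\mathcal{K}_{k-1}(n-1)$.
   Context: A linear chord diagram of size $n$ is a partition of $\{1,2,\dots,2n\}$ into blocks of size two, called chords. For a chord $c=\{s_c,e_c\}$ with $s_c<e_c$, $s_c$ is its start point, $e_c$ its end point, and its length is $e_c-s_c$. $\mathcal{K}_k(n)$ is the set of all linear chord diagrams of size $n$ in which every chord has length at least $k$. Let $M_{n,k}=\{k+1,\dots,2n-k\}$, and for a diagram $C$ of size $n$ let $S_C$ be the set of chords of $C$ with neither endpoint in $M_{n,k}$. The map $\beta_{n,k}$ is defined on $C\in\mathcal{K}_k(n)$ as follows. Let $c$ be the chord whose end point is $2n-k+1$ (the position immediately after $M_{n,k}$). Repeatedly swap the start point of $c$ with the nearest start point to its right belonging to a chord of $S_C$ (the two chords exchange these start positions), until no start point of a chord of $S_C$ lies to the right of the start point of $c$. Then remove the chord $c$ and relabel the remaining $2n-2$ points $1,\dots,2n-2$ preserving order. The result is $\beta_{n,k}(C)$, a diagram of size $n-1$. *)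

From mathcomp Require Import all_boot.
Set Implicit Arguments. Unset Strict Implicit. Unset Printing Implicit Defensive.

(* A linear chord diagram of size n on the points 1..2n is encoded by its
   partner map p : nat -> nat (p i is the other endpoint of the chord
   containing i); values outside 1..2n are irrelevant. *)
Definition is_lcd (n : nat) (p : nat -> nat) : Prop :=
  forall i, 1 <= i <= 2 * n ->
    [/\ 1 <= p i <= 2 * n, p i != i & p (p i) = i].

Definition K (k n : nat) (p : nat -> nat) : Prop :=
  is_lcd n p /\ forall i, 1 <= i <= 2 * n -> i < p i -> k <= p i - i.

Definition inM (n k x : nat) : bool := (k < x) && (x <= 2 * n - k).

(* Chords are identified by their end points (swapping start points never
   moves end points).  The chord of C = p0 with end point e is in S_C iff
   neither of its endpoints lies in M_{n,k}. *)
Definition inSC (n k : nat) (p0 : nat -> nat) (e : nat) : bool :=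
  [&& p0 e < e, ~~ inM n k e & ~~ inM n k (p0 e)].

Definition swap_starts (p : nat -> nat) (e1 e2 : nat) : nat -> nat :=
  fun x =>
    if x == e1 then p e2
    else if x == e2 then p e1
    else if x == p e1 then e2
    else if x == p e2 then e1
    else p x.

(* The end point 2n-k+1 of the distinguished chord c. *)
Definition cend (n k : nat) : nat := (2 * n - k).+1.

(* One step of the swapping procedure, for the original diagram p0 and the
   current diagram p: let s be the current start point of c; if some start
   point q > s belongs to a chord of S_C, take the nearest one and swap. *)
Definition beta_step (n k : nat) (p0 p : nat -> nat) : nat -> nat :=
  let s := p (cend n k) in
  let cands := [seq q <- iota s.+1 (2 * n - s)
                 | (q < p q) && inSC n k p0 (p q)] in
  match cands with
  | [::] => p
  | q :: _ => swap_starts p (cend n k) (p q)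
  end.

(* Repeat until no more swap is possible (2n steps always suffice since the
   start of c strictly moves right at each effective step; once no swap is
   possible the step is the identity). *)
Definition beta_swapped (n k : nat) (p0 : nat -> nat) : nat -> nat :=
  iter (2 * n) (beta_step n k p0) p0.

Definition relab (a b x : nat) : nat := x - (a < x) - (b < x).
Definition unrelab (a b y : nat) : nat :=
  let y1 := if a <= y then y.+1 else y in
  if b <= y1 then y1.+1 else y1.

Definition beta (n k : nat) (p0 : nat -> nat) : nat -> nat :=
  let pf := beta_swapped n k p0 in
  let b := cend n k in
  let a := pf b in
  fun y => relab a b (pf (unrelab a b y)).

From mathcomp Require Import all_boot zify.
Set Implicit Arguments. Unset Strict Implicit. Unset Printing Implicit Defensive.

(* The swaps only permute the start points of the chords of S_C, all of which
   lie in {1..k} since a chord of length >= k cannot start after 2n-k; the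
   chord c with end b = 2n-k+1 belongs to S_C because its start is at most
   2n-2k+1 <= k.  Through every swap three facts persist: chords outside S_C
   do not move, every chord other than c has length >= k, and every chord
   enclosing both endpoints of c has length > k.  Indeed, when the start s of
   c is exchanged with the nearest S_C start q > s, whose chord ends at some
   e > b, that chord gets the longer span [s, e]; and no chord ending after b
   can start strictly between s and q, for it would belong to S_C.  Removing
   c shortens a chord by the number of endpoints of c it encloses, so every
   length stays >= k-1.  The invariant holds after any number of swaps. *)

Lemma lcd_partnerE n p x y : is_lcd n p ->
  1 <= x <= 2 * n -> 1 <= y <= 2 * n -> (p x == y) = (x == p y).
Proof.
move=> lcd_p x_range y_range; apply/eqP/eqP => [<-|->].
- by have [_ _ ->] := lcd_p _ x_range.
- by have [_ _ ->] := lcd_p _ y_range.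
Qed.

Lemma lcd_partner_inj n p x y : is_lcd n p ->
  1 <= x <= 2 * n -> 1 <= y <= 2 * n -> (p x == p y) = (x == y).
Proof.
move=> lcd_p x_range y_range; have [py_range _ ppy] := lcd_p _ y_range.
by rewrite (lcd_partnerE lcd_p) // ppy.
Qed.

Lemma K_end_long n k p x : K k n p -> 1 <= x <= 2 * n -> p x < x -> k <= x - p x.
Proof.
move=> [lcd_p long] x_range x_end; have [px_range _ ppx] := lcd_p _ x_range.
by have := long _ px_range; rewrite ppx; apply.
Qed.

Lemma unrelabE a b y : unrelab a b y = y + (a <= y) + (b <= y + (a <= y)).
Proof.
rewrite /unrelab; case: (a <= y); rewrite ?addn0 ?addn1;
  by case: ifP; rewrite ?addn0 ?addn1.
Qed.

Lemma unrelab_bounds a b y : y <= unrelab a b y <= y.+2.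
Proof. by rewrite unrelabE; lia. Qed.

Section Relabel.
Variables a b : nat.
Hypothesis lt_ab : a < b.

Lemma unrelabK : cancel (unrelab a b) (relab a b).
Proof. by move=> y; rewrite /relab unrelabE; lia. Qed.

Lemma unrelab_neq y : unrelab a b y != a /\ unrelab a b y != b.
Proof. by rewrite unrelabE; lia. Qed.

Lemma relabK x : x != a -> x != b -> unrelab a b (relab a b x) = x.
Proof. by rewrite /relab unrelabE; lia. Qed.

Lemma ltn_relab x z : x != a -> x != b -> z != a -> z != b ->
  (relab a b x < relab a b z) = (x < z).
Proof. by rewrite /relab; lia. Qed.

Lemma relab_range n x : 0 < a -> b <= 2 * n -> x != a -> x != b ->
  1 <= x <= 2 * n -> 1 <= relab a b x <= 2 * n.-1.
Proof. by rewrite /relab; lia. Qed.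

Lemma relab_dist k x z : x != a -> x != b -> z != a -> z != b -> x < z ->
  k <= z - x -> (x < a -> b < z -> k < z - x) ->
  k.-1 <= relab a b z - relab a b x.
Proof. by rewrite /relab; lia. Qed.

End Relabel.

Definition drop_chord (p : nat -> nat) (b : nat) : nat -> nat :=
  fun y => relab (p b) b (p (unrelab (p b) b y)).

Section DropChord.
Variables (n : nat) (p : nat -> nat) (b : nat).
Hypotheses (lcd_p : is_lcd n p) (b_range : 1 <= b <= 2 * n) (b_end : p b < b).
Local Notation a := (p b).

Let a_range : 1 <= a <= 2 * n. Proof. by case: (lcd_p b_range). Qed.

Lemma partner_neq x :
  1 <= x <= 2 * n -> x != a -> x != b -> p x != a /\ p x != b.
Proof.
move=> x_range xa xb; have [_ _ ppb] := lcd_p b_range.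
by rewrite !(lcd_partnerE lcd_p) // ppb.
Qed.

Lemma drop_chord_points y : 1 <= y <= 2 * n.-1 ->
  exists x, [/\ 1 <= x <= 2 * n, x != a, x != b & y = relab a b x].
Proof.
move=> y_range; have [xa xb] := unrelab_neq b_end y.
exists (unrelab a b y); split; rewrite ?unrelabK //.
by have := unrelab_bounds a b y; lia.
Qed.

Lemma drop_chord_relab x : x != a -> x != b ->
  drop_chord p b (relab a b x) = relab a b (p x).
Proof. by move=> xa xb; rewrite /drop_chord relabK. Qed.

Lemma drop_chord_lcd : is_lcd n.-1 (drop_chord p b).
Proof.
move=> _ /drop_chord_points[x [x_range xa xb ->]].
have [px_range px_neq ppx] := lcd_p x_range.
have [pxa pxb] := partner_neq x_range xa xb.
rewrite !drop_chord_relab // ppx; split => //.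
- by apply: relab_range; case/andP: a_range; case/andP: b_range.
- by apply: contra_neq px_neq => /(congr1 (unrelab a b)); rewrite !relabK.
Qed.

Lemma drop_chord_K k :
  (forall e, 1 <= e <= 2 * n -> e != b -> p e < e -> k <= e - p e) ->
  (forall e, 1 <= e <= 2 * n -> p e < e -> p e < a -> b < e -> k < e - p e) ->
  K k.-1 n.-1 (drop_chord p b).
Proof.
move=> long longer; split=> [|_ /drop_chord_points[x [x_range xa xb ->]]].
  exact: drop_chord_lcd.
have [px_range _ ppx] := lcd_p x_range.
have [pxa pxb] := partner_neq x_range xa xb.
rewrite drop_chord_relab // ltn_relab // => x_lt_px.
apply: relab_dist => //.
- by have := long _ px_range pxb; rewrite ppx; apply.
- by have := longer _ px_range; rewrite ppx; apply.
Qed.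

End DropChord.

Lemma swap_starts_e1 p e1 e2 : swap_starts p e1 e2 e1 = p e2.
Proof. by rewrite /swap_starts eqxx. Qed.

Lemma swap_starts_other p e1 e2 x :
  x != e1 -> x != e2 -> x != p e1 -> x != p e2 -> swap_starts p e1 e2 x = p x.
Proof.
move=> /negbTE xe1 /negbTE xe2 /negbTE xs1 /negbTE xs2.
by rewrite /swap_starts xe1 xe2 xs1 xs2.
Qed.

Section SwapStarts.
Variables (n : nat) (p : nat -> nat) (e1 e2 : nat).
Hypothesis lcd_p : is_lcd n p.
Hypotheses (e1_range : 1 <= e1 <= 2 * n) (e2_range : 1 <= e2 <= 2 * n).
Hypotheses (e1_end : p e1 < e1) (e2_end : p e2 < e2) (e1_neq_e2 : e1 != e2).
Local Notation p' := (swap_starts p e1 e2).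

Let pe1_neq_e2 : p e1 != e2.
Proof.
apply/eqP => pe1E; have [_ _ pe2E] := lcd_p e1_range.
by move: e2_end; rewrite -pe1E pe2E; lia.
Qed.

Let pe2_neq_e1 : p e2 != e1.
Proof.
apply/eqP => pe2E; have [_ _ pe1E] := lcd_p e2_range.
by move: e1_end; rewrite -pe2E pe1E; lia.
Qed.

Let pe1_neq_pe2 : p e1 != p e2.
Proof. by rewrite (lcd_partner_inj lcd_p). Qed.

Lemma swap_starts_e2 : p' e2 = p e1.
Proof. by rewrite /swap_starts eq_sym (negbTE e1_neq_e2) eqxx. Qed.

Lemma swap_starts_pe1 : p' (p e1) = e2.
Proof. by rewrite /swap_starts ltn_eqF // (negbTE pe1_neq_e2) eqxx. Qed.

Lemma swap_starts_pe2 : p' (p e2) = e1.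
Proof.
rewrite /swap_starts (negbTE pe2_neq_e1) ltn_eqF //.
by rewrite eq_sym (negbTE pe1_neq_pe2) eqxx.
Qed.

Lemma swap_starts_lcd : is_lcd n p'.
Proof.
move=> x x_range.
have [pe1_range _ _] := lcd_p e1_range; have [pe2_range _ _] := lcd_p e2_range.
case: (eqVneq x e1) => [->|xe1].
  by rewrite swap_starts_e1 swap_starts_pe2; split => //; lia.
case: (eqVneq x e2) => [->|xe2].
  by rewrite swap_starts_e2 swap_starts_pe1; split => //; lia.
case: (eqVneq x (p e1)) => [->|xs1].
  by rewrite swap_starts_pe1 swap_starts_e2; split => //; lia.
case: (eqVneq x (p e2)) => [->|xs2].
  by rewrite swap_starts_pe2 swap_starts_e1; split => //; lia.
have [px_range px_neq ppx] := lcd_p x_range.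
have pxN y : 1 <= y <= 2 * n -> x != y -> p x != p y.
  by move=> y_range; rewrite (lcd_partner_inj lcd_p).
have pxN' y : 1 <= y <= 2 * n -> x != p y -> p x != y.
  by move=> y_range; rewrite (lcd_partnerE lcd_p).
by rewrite !swap_starts_other ?pxN ?pxN' ?ppx // eq_sym.
Qed.

Lemma swap_starts_end x : p e1 < e2 -> p e2 < e1 -> (p' x < x) = (p x < x).
Proof.
move=> pe1_lt pe2_lt.
case: (eqVneq x e1) => [->|xe1]; first by rewrite swap_starts_e1 pe2_lt e1_end.
case: (eqVneq x e2) => [->|xe2]; first by rewrite swap_starts_e2 pe1_lt e2_end.
have [_ _ ppe1] := lcd_p e1_range; have [_ _ ppe2] := lcd_p e2_range.
case: (eqVneq x (p e1)) => [->|xs1]; first by rewrite swap_starts_pe1 ppe1; lia.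
case: (eqVneq x (p e2)) => [->|xs2]; first by rewrite swap_starts_pe2 ppe2; lia.
by rewrite swap_starts_other.
Qed.

End SwapStarts.

Lemma cend_range n k : 0 < k -> k <= n -> 1 <= cend n k <= 2 * n.
Proof. by rewrite /cend; lia. Qed.

Lemma cend_end n k p : 0 < k -> k <= n -> K k n p -> p (cend n k) < cend n k.
Proof.
move=> k_gt0 k_le_n [lcd_p long]; have b_range := cend_range k_gt0 k_le_n.
have [pb_range pb_neq _] := lcd_p _ b_range.
rewrite ltn_neqAle pb_neq leqNgt; apply/negP => /(long _ b_range).
by move: pb_range; rewrite /cend; lia.
Qed.

Lemma cend_inSC n k p : 0 < k -> k <= n -> 2 * (n - k) < k -> K k n p ->
  inSC n k p (cend n k).
Proof.
move=> k_gt0 k_le_n k_large Kp; have b_end := cend_end k_gt0 k_le_n Kp.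
have := K_end_long Kp (cend_range k_gt0 k_le_n) b_end.
by rewrite /inSC b_end /inM /cend; lia.
Qed.

Record swap_invariant (n k : nat) (p0 p : nat -> nat) : Prop := SwapInvariant {
  inv_lcd : is_lcd n p;
  inv_end : forall x, 1 <= x <= 2 * n -> (p x < x) = (p0 x < x);
  inv_fixed : forall e, 1 <= e <= 2 * n -> p0 e < e -> ~~ inSC n k p0 e ->
    p e = p0 e;
  inv_SC_start : forall e, 1 <= e <= 2 * n -> inSC n k p0 e -> p e <= k;
  inv_long : forall e, 1 <= e <= 2 * n -> e != cend n k -> p e < e -> k <= e - p e;
  inv_longer : forall e, 1 <= e <= 2 * n -> p e < e ->
    p e < p (cend n k) -> cend n k < e -> k < e - p e }.

Lemma swap_invariant0 n k p : 0 < k -> k <= n -> K k n p -> swap_invariant n k p p.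
Proof.
move=> k_gt0 k_le_n Kp; have long := K_end_long Kp.
have b_range := cend_range k_gt0 k_le_n; have b_end := cend_end k_gt0 k_le_n Kp.
split => //; first by case: Kp.
- move=> e e_range /and3P[e_end _ pe_nM]; have := long _ e_range e_end.
  by move: pe_nM e_range; rewrite /inM; lia.
- by move=> e e_range _; apply: long.
- move=> e e_range e_end pe_lt b_lt_e; have := long _ b_range b_end; lia.
Qed.

Section SwapStep.
Variables (n k : nat) (p0 p : nat -> nat) (e : nat).
Local Notation b := (cend n k).
Hypotheses (k_gt0 : 0 < k) (k_le_n : k <= n) (b_SC : inSC n k p0 b).
Hypothesis inv : swap_invariant n k p0 p.
Hypotheses (e_range : 1 <= e <= 2 * n) (e_end : p e < e) (e_SC : inSC n k p0 e).
Hypothesis s_lt_q : p b < p e.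
Hypothesis nearest :
  forall x, p b < x < p e -> ~~ ((x < p x) && inSC n k p0 (p x)).
Local Notation p' := (swap_starts p b e).

Let lcd_p := inv_lcd inv.
Let b_range : 1 <= b <= 2 * n := cend_range k_gt0 k_le_n.
Let b_end : p b < b. Proof. by rewrite (inv_end inv) //; case/and3P: b_SC. Qed.
Let s_le_k : p b <= k. Proof. exact: (inv_SC_start inv). Qed.
Let q_le_k : p e <= k. Proof. exact: (inv_SC_start inv). Qed.
Let b_neq_e : b != e. Proof. by apply/eqP => bE; move: s_lt_q; rewrite bE ltnn. Qed.
Let e_long : k <= e - p e. Proof. by apply: (inv_long inv); rewrite // eq_sym. Qed.

Let b_lt_e : b < e.
Proof.
have [/andP[pe_gt0 _] _ _] := lcd_p e_range.
move: e_SC b_neq_e; rewrite /inSC /inM /cend => /and3P[_ + _] /eqP; lia.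
Qed.

Lemma swap_step_end x : (p' x < x) = (p x < x).
Proof.
apply: (swap_starts_end lcd_p) => //.
- exact: ltn_trans b_end b_lt_e.
- by move: q_le_k; rewrite /cend; lia.
Qed.

Lemma swap_step_other x :
  1 <= x <= 2 * n -> p x < x -> x != b -> x != e -> p' x = p x.
Proof.
move=> x_range x_end xb xe; apply: swap_starts_other => //.
- apply: contraTneq x_end => ->; have [_ _ ->] := lcd_p b_range.
  by rewrite -leqNgt ltnW.
- apply: contraTneq x_end => ->; have [_ _ ->] := lcd_p e_range.
  by rewrite -leqNgt ltnW.
Qed.

Lemma swap_step_gap x :
  1 <= x <= 2 * n -> p x < x -> b < x -> p b < p x -> p e <= p x.
Proof.
move=> x_range x_end b_lt_x s_lt_px; rewrite leqNgt; apply/negP => px_lt_q.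
have [_ _ ppx] := lcd_p x_range.
have x_nSC : ~~ inSC n k p0 x.
  by have := @nearest (p x); rewrite s_lt_px px_lt_q ppx x_end; apply.
have x_end0 : p0 x < x by rewrite -(inv_end inv).
have px_eq := inv_fixed inv x_range x_end0 x_nSC.
move: x_nSC b_lt_x px_lt_q q_le_k; rewrite /inSC x_end0 -px_eq /inM /cend; lia.
Qed.

Lemma swap_step_invariant : swap_invariant n k p0 p'.
Proof.
have SC_end x : 1 <= x <= 2 * n -> inSC n k p0 x -> p x < x.
  by move=> x_range /and3P[x_end0 _ _]; rewrite (inv_end inv).
split.
- exact: (swap_starts_lcd lcd_p).
- by move=> x x_range; rewrite swap_step_end (inv_end inv).
- move=> x x_range x_end0 x_nSC.
  have xb : x != b by apply: contraNneq x_nSC => ->.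
  have xe : x != e by apply: contraNneq x_nSC => ->.
  by rewrite swap_step_other ?(inv_fixed inv) ?(inv_end inv).
- move=> x x_range x_SC.
  case: (eqVneq x b) => [->|xb]; first by rewrite swap_starts_e1.
  case: (eqVneq x e) => [->|xe]; first by rewrite swap_starts_e2.
  by rewrite swap_step_other ?SC_end ?(inv_SC_start inv).
- move=> x x_range xb; rewrite swap_step_end => x_end.
  case: (eqVneq x e) => [->|xe]; first by rewrite swap_starts_e2; lia.
  by rewrite swap_step_other ?(inv_long inv).
- move=> x x_range; rewrite swap_step_end swap_starts_e1 => x_end.
  case: (eqVneq x e) => [->|xe]; first by rewrite swap_starts_e2; lia.
  move=> + b_lt_x; have xb : x != b by rewrite neq_ltn b_lt_x orbT.
  rewrite swap_step_other // => px_lt_q.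
  case: (ltnP (p x) (p b)) => [px_lt_s|s_le_px]; first exact: (inv_longer inv).
  have s_lt_px : p b < p x.
    by rewrite ltn_neqAle s_le_px andbT (lcd_partner_inj lcd_p) // eq_sym.
  by have := swap_step_gap x_range x_end b_lt_x s_lt_px; rewrite leqNgt px_lt_q.
Qed.

End SwapStep.

Lemma filter_iota_cons (P : pred nat) a m q r :
  [seq x <- iota a m | P x] = q :: r ->
  [/\ P q, a <= q, q < a + m & forall x, a <= x -> x < q -> ~~ P x].
Proof.
elim: m a => [|m IH] a //=.
case: ifP => [Pa [<- _]|Pa /IH[Pq a_lt_q q_lt nearest]].
  by split => //; lia.
split => //; try lia.
move=> x a_le_x x_lt_q; case: (eqVneq x a) => [->|xa]; first by rewrite Pa.
by apply: nearest; lia.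
Qed.

Lemma beta_step_invariant n k p0 p :
  0 < k -> k <= n -> inSC n k p0 (cend n k) ->
  swap_invariant n k p0 p -> swap_invariant n k p0 (beta_step n k p0 p).
Proof.
move=> k_gt0 k_le_n b_SC inv; rewrite /beta_step.
case E: [seq _ <- _ | _] => [//|q r].
have [/andP[q_start q_SC] s_lt_q q_lt nearest] := filter_iota_cons E.
have b_range := cend_range k_gt0 k_le_n.
have [s_range _ _] := inv_lcd inv b_range.
have q_range : 1 <= q <= 2 * n by lia.
have [pq_range _ ppq] := inv_lcd inv q_range.
apply: swap_step_invariant => //; rewrite ?ppq //.
by move=> x /andP[? ?]; apply: nearest.
Qed.

Lemma beta_swapped_invariant n k p :
  0 < k -> k <= n -> 2 * (n - k) < k -> K k n p ->
  swap_invariant n k p (beta_swapped n k p).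
Proof.
move=> k_gt0 k_le_n k_large Kp; rewrite /beta_swapped.
elim: (2 * n) => [|m IH] /=.
- exact: swap_invariant0.
- exact: beta_step_invariant (cend_inSC k_gt0 k_le_n k_large Kp) IH.
Qed.

Theorem lemma5 (n k : nat) (p : nat -> nat) :
  0 < n -> 0 < k -> k <= n -> 3 * (n - k) < n ->
  K k n p -> K k.-1 n.-1 (beta n k p).
Proof.
move=> _ k_gt0 k_le_n n_small Kp.
have k_large : 2 * (n - k) < k by lia.
have inv := beta_swapped_invariant k_gt0 k_le_n k_large Kp.
have b_range := cend_range k_gt0 k_le_n.
have b_end : beta_swapped n k p (cend n k) < cend n k.
  by rewrite (inv_end inv) // cend_end.
(* [beta n k p] unfolds to [drop_chord (beta_swapped n k p) (cend n k)]. *)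
exact: drop_chord_K (inv_lcd inv) b_range b_end _ (inv_long inv) (inv_longer inv).
Qed.
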